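(* Let $s$ be a Lucasian GNS on a ring $D$. For all positive integers $m$ and $a,b\mid m$ with $a\mid b$ or $b\mid a$, one has $s(m)\equiv\frac m\ell\frac{s(a)s(b)}{s(g)}\bmod s(a)s(b)$, where $g=\gcd(a,b)$ and $\ell=\operatorname{lcm}(a,b)$.
   Context: A GNS over $D$ is $s\colon\mathbf N\to D$ with $s(0)=0$, $s(n)$ a non-zero-divisor for $n>0$, and $s(n-k)\mid s(n)-s(k)$ for $n>k>0$. It is Lucasian if $s(a+b)\equiv s(a)+s(b)\bmod s(a)s(b)$ for all $a,b$. *)

From mathcomp Require Import all_boot all_algebra.
Set Implicit Arguments. Unset Strict Implicit. Unset Printing Implicit Defensive.
Import GRing.Theory.
Local Open Scope ring_scope.

Definition nonzerodiv (D : comNzRingType) (x : D) : Prop :=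
  forall y : D, x * y = 0 -> y = 0.

Definition rdvd (D : comNzRingType) (a b : D) : Prop := exists c : D, b = c * a.

Definition congr_mod (D : comNzRingType) (x y c : D) : Prop := rdvd c (x - y).

Definition GNS (D : comNzRingType) (s : nat -> D) : Prop :=
  [/\ s 0%N = 0,
      (forall n, (0 < n)%N -> nonzerodiv (s n)) &
      (forall n k, (0 < k)%N -> (k < n)%N -> rdvd (s (n - k)%N) (s n - s k))].

Definition lucasian (D : comNzRingType) (s : nat -> D) : Prop :=
  GNS s /\ forall a b : nat, congr_mod (s (a + b)%N) (s a + s b) (s a * s b).

From mathcomp Require Import all_boot all_algebra.
From mathcomp Require Import ring.
Import GRing.Theory.
Local Open Scope ring_scope.

(* Iterating the Lucas congruence gives s(jn) = j s(n) mod s(n)^2; in particular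
   a | b implies s(a) | s(b), so s(b)^2 is a multiple of s(a) s(b).  For a | b | m
   this yields s(m) = (m/b) s(b) mod s(a) s(b), and then g = a, l = b and the
   quotient s(a) s(b) / s(g) is s(b). *)

Lemma nonzerodiv_lreg {D : comNzRingType} {x : D} : nonzerodiv x -> GRing.lreg x.
Proof.
move=> nzx y z /eqP; rewrite -subr_eq0 -mulrBr => /eqP /nzx /eqP.
by rewrite subr_eq0 => /eqP.
Qed.

Section LucasCongruence.

Variables (D : comNzRingType) (s : nat -> D).
Hypothesis s0 : s 0%N = 0.
Hypothesis s_lucas : forall a b : nat, congr_mod (s (a + b)%N) (s a + s b) (s a * s b).

Lemma lucas_mul_congr (j n : nat) :
  congr_mod (s (j * n)%N) (j%:R * s n) (s n * s n).
Proof.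
elim: j => [|j [x IH]]; first by exists 0; rewrite mul0n s0 !mul0r subrr.
have [c Hc] := s_lucas (j * n)%N n.
exists (x + c * (j%:R + x * s n)).
have -> : s (j.+1 * n)%N = s (j * n)%N + s n + c * (s (j * n)%N * s n).
  by rewrite mulSn addnC -[LHS](subrK (s (j * n)%N + s n)) Hc addrC.
have -> : s (j * n)%N = j%:R * s n + x * (s n * s n).
  by rewrite -[LHS](subrK (j%:R * s n)) IH addrC.
by rewrite -addn1 natrD; ring.
Qed.

Lemma lucas_dvd (a b : nat) : (a %| b)%N -> rdvd (s a) (s b).
Proof.
case/dvdnP=> k ->; have [x Hx] := lucas_mul_congr k a.
by exists (k%:R + x * s a); rewrite -[LHS](subrK (k%:R * s a)) Hx; ring.
Qed.

Lemma lucas_congr_quotient (m a b : nat) : (a %| b)%N -> (b %| m)%N ->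
  (0 < b)%N -> congr_mod (s m) ((m %/ b)%N%:R * s b) (s a * s b).
Proof.
move=> /lucas_dvd [y Hy] /dvdnP [k ->] b_gt0; rewrite mulnK //.
have [x Hx] := lucas_mul_congr k b.
by exists (x * y); rewrite Hx {1}Hy; ring.
Qed.

End LucasCongruence.

Theorem corollary5p13 (D : comNzRingType) (s : nat -> D) (hs : lucasian s)
  (m a b : nat) (hm : (0 < m)%N) (ha : (a %| m)%N) (hb : (b %| m)%N)
  (hab : (a %| b)%N \/ (b %| a)%N)
  (q : D) (hq : s (gcdn a b) * q = s a * s b) :
  congr_mod (s m) ((m %/ lcmn a b)%N%:R * q) (s a * s b).
Proof.
have [[s0 s_nzd _] s_lucas] := hs.
wlog {hab} ab : a b ha hb q hq / (a %| b)%N.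
  move=> gen; case: hab => [|ba]; first exact: gen.
  rewrite gcdnC lcmnC [s a * s b]mulrC in hq *; exact: gen.
have a_gt0 := dvdn_gt0 hm ha; have b_gt0 := dvdn_gt0 hm hb.
move: hq; rewrite (gcdn_idPl ab) (lcmn_idPr ab) => /(nonzerodiv_lreg (s_nzd a a_gt0)) ->.
exact: lucas_congr_quotient.
Qed.
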